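(* Let $P_F$ denote the joint distribution, in a population of healthcare-seeking individuals, of the random variables $(A, Y, W, D, S, \Delta, X)$, where $A\in\{0,1\}$ is a binary exposure (vaccination status or dichotomized immune marker level at the time of potential SARS-CoV-2 exposure), $Y\in\{0,1\}$ indicates SARS-CoV-2 infection, $W\in\{0,1\}$ indicates a cause other than SARS-CoV-2 that could induce symptoms, $D\in\{0,1\}$ indicates meeting the symptom definition, $S\in\{0,1\}$ indicates obtaining SARS-CoV-2 testing (and hence enrollment in the test-negative design (TND) study when $D=1$), $\Delta\in\{0,1\}$ indicates that the exposure is observed, and $X\in\mathbb{R}^r$ are covariates. Let $P$ denote the distribution of the data as recorded in the TND study (exposure status recorded at testing and SARS-CoV-2 test result), and define $$\mu_P(y,x) := P(A=1\mid D=1,S=1,\Delta=1,Y=y,X=x),\qquad OR(P)(x):=\frac{\mu_P(1,x)/(1-\mu_P(1,x))}{\mu_P(0,x)/(1-\mu_P(0,x))}.$$ Assume: (1) $P\big(P(Y=1,D=1\mid S=1,X)>0\big)=1$ and $P\big(P(Y=0,D=1\mid S=1,X)>0\big)=1$; (2) $P\big(P(\Delta=1\mid D=1,S=1,Y,X)>0\big)=1$; (3) $P_F\big(P_F(S=1\mid D=1,Y,X)>0\big)=1$; (4) $S\perp\!\!\!\perp A\mid D=1,Y,X$; (5) $\Delta\perp\!\!\!\perp A\mid D=1,S=1,Y,X$; (6) (noncase exchangeability) $P_F(Y=0,D=1\mid A=1,X)=P_F(Y=0,D=1\mid A=0,X)$; (7) the exposure status recorded at SARS-CoV-2 testing accurately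 reflects the exposure status $A$ at the time of potential SARS-CoV-2 exposure in TND participants; (8) the SARS-CoV-2 test result accurately measures the infection status $Y$ in TND participants. Then $$OR(P)(x)=RR(P_F)(x):=\frac{P_F(Y=1,D=1\mid A=1,X=x)}{P_F(Y=1,D=1\mid A=0,X=x)}.$$
   Context: Test-negative design: individuals are enrolled if they meet the symptom definition ($D=1$) and obtain SARS-CoV-2 testing ($S=1$); cases test positive ($Y=1$) and noncases test negative ($Y=0$). The exposure $A$ is observed only for participants with $\Delta=1$ (missing either unintentionally or by a two-phase sampling design). $P_F$ is the full-data distribution over the healthcare-seeking population; $P$ is the distribution of the observed TND data. *)

From HB Require Import structures.
From mathcomp Require Import all_boot all_order all_algebra.
From mathcomp Require Import reals.
Set Implicit Arguments. Unset Strict Implicit. Unset Printing Implicit Defensive.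
Import Order.TTheory GRing.Theory Num.Theory.
Local Open Scope ring_scope.

(* Outcome of the binary variables of one individual:
   (A, Y, W, D, S, Delta, Aobs, Yobs) where
   A    = true exposure at time of potential exposure,
   Y    = true SARS-CoV-2 infection status,
   W    = other cause inducing symptoms,
   D    = meets symptom definition,
   S    = obtains SARS-CoV-2 testing,
   Delta= exposure is observed,
   Aobs = exposure status as recorded at testing,
   Yobs = SARS-CoV-2 test result. *)
Definition omega : finType :=
  (bool * bool * bool * bool * bool * bool * bool * bool)%type.

Definition vA     (w : omega) : bool := w.1.1.1.1.1.1.1.
Definition vY     (w : omega) : bool := w.1.1.1.1.1.1.2.
Definition vW     (w : omega) : bool := w.1.1.1.1.1.2.
Definition vD     (w : omega) : bool := w.1.1.1.1.2.
Definition vS     (w : omega) : bool := w.1.1.1.2.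
Definition vDelta (w : omega) : bool := w.1.1.2.
Definition vAobs  (w : omega) : bool := w.1.2.
Definition vYobs  (w : omega) : bool := w.2.

Section Prob.
Variable R : realType.

Definition is_pmf (p : omega -> R) : Prop :=
  (forall w, 0 <= p w) /\ \sum_(w : omega) p w = 1.

Definition Pr (p : omega -> R) (E : pred omega) : R :=
  \sum_(w : omega | E w) p w.

(* conditional probability P(E | F) = P(E and F) / P(F)
   (MathComp convention: division by 0 yields 0) *)
Definition CPr (p : omega -> R) (E F : pred omega) : R :=
  Pr p [pred w | E w && F w] / Pr p F.

(* conditional independence of binary variables U and V given event F,
   in product-rule form (no division needed):
   P(U=u,V=v,F) P(F) = P(U=u,F) P(V=v,F) for all u v. *)
Definition cond_indep (p : omega -> R) (U V : omega -> bool) (F : pred omega)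
  : Prop :=
  forall u v : bool,
    Pr p [pred w | (U w == u) && (V w == v) && F w] * Pr p F =
    Pr p [pred w | (U w == u) && F w] * Pr p [pred w | (V w == v) && F w].

(* mu_P(y, x): P(A=1 | D=1, S=1, Delta=1, Y=y, X=x) computed in the observed
   TND data, i.e. with the recorded exposure and the test result; pX is the
   conditional law of the full data given X = x. *)
Definition muP (pX : omega -> R) (y : bool) : R :=
  CPr pX (fun w => vAobs w)
     (fun w => [&& vD w, vS w, vDelta w & vYobs w == y]).

Definition odds (m : R) : R := m / (1 - m).

Definition ORP (pX : omega -> R) : R := odds (muP pX true) / odds (muP pX false).

Definition RRPF (pX : omega -> R) : R :=
  CPr pX (fun w => vY w && vD w) (fun w => vA w) /
  CPr pX (fun w => vY w && vD w) (fun w => ~~ vA w).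

End Prob.

From mathcomp Require Import all_boot all_order all_algebra.
From mathcomp Require Import reals.
Set Implicit Arguments. Unset Strict Implicit. Unset Printing Implicit Defensive.
Import Order.TTheory GRing.Theory Num.Theory.
Local Open Scope ring_scope.

(* Write m(a, y) for P_F(A = a, Y = y, D = 1).  Since the recorded exposure and
   test result are exact among participants, the observed exposure odds among
   those with Y = y can be computed from the true variables.  Testing and then
   exposure ascertainment are each independent of A given D = 1 and Y, so the
   selected exposure counts are proportional to m(., y) and the observed odds are
   m(1, y) / m(0, y).  Hence the odds ratio is
   [m(1,1) / m(0,1)] / [m(1,0) / m(0,0)], and noncase exchangeability says
   exactly that m(1,0) / m(0,0) = P_F(A = 1) / P_F(A = 0), which turns it into
   the risk ratio. *)

Section Probability.
Variables (R : realType) (p : omega -> R).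
Hypothesis p_ge0 : forall w, 0 <= p w.

Lemma Pr_ge0 (E : pred omega) : 0 <= Pr p E.
Proof. exact: sumr_ge0. Qed.

Lemma eq_Pr (E F : pred omega) : E =1 F -> Pr p E = Pr p F.
Proof. exact: eq_bigl. Qed.

Lemma le_Pr (E F : pred omega) : (forall w, E w -> F w) -> Pr p E <= Pr p F.
Proof.
move=> EF; rewrite /Pr !(big_mkcond _ p); apply: ler_sum => w _.
by case: ifP => [/EF -> //|_]; case: ifP.
Qed.

Lemma PrID (E B : pred omega) :
  Pr p E = Pr p (fun w => E w && B w) + Pr p (fun w => E w && ~~ B w).
Proof. exact: bigID. Qed.

Lemma eq_Pr_as (E F : pred omega) :
  (forall w, p w != 0 -> E w = F w) -> Pr p E = Pr p F.
Proof.
move=> EF; rewrite /Pr !(big_mkcond _ p); apply: eq_bigr => w _.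
by have [->|/EF->] := eqVneq (p w) 0; rewrite ?if_same.
Qed.

Lemma Pr_eq0_pt (E : pred omega) w : Pr p E = 0 -> E w -> p w = 0.
Proof. by move=> E0 Ew; apply: (psumr_eq0P _ E0). Qed.

Lemma CPr_gt0 (E F : pred omega) :
  0 < CPr p E F -> 0 < Pr p (fun w => E w && F w).
Proof.
move=> CPr_pos; rewrite lt0r Pr_ge0 andbT; apply: contraTneq CPr_pos => E0.
by rewrite /CPr (eq_Pr (F := fun w => E w && F w)) // E0 mul0r ltxx.
Qed.

End Probability.

(* The conclusion is the product form of the independence of A and the joint
   selection [Delta && S] given F. *)
Lemma two_stage_selection_indep (R : realType) (p : omega -> R)
    (S Delta A : omega -> bool) (F G : pred omega) (a : bool) :
  (forall w, G w = S w && F w) ->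
  cond_indep p S A F -> cond_indep p Delta A G -> Pr p G != 0 ->
  Pr p (fun w => (Delta w == true) && (A w == a) && G w) * Pr p F =
  Pr p (fun w => (Delta w == true) && G w) * Pr p (fun w => (A w == a) && F w).
Proof.
move=> defG indepS indepDelta G_neq0.
have PrG : Pr p G = Pr p (fun w => (S w == true) && F w).
  by apply: eq_Pr => w; rewrite defG; case: (S w).
have PrAG : Pr p (fun w => (A w == a) && G w) =
            Pr p (fun w => (S w == true) && (A w == a) && F w).
  by apply: eq_Pr => w; rewrite defG; case: (S w); rewrite ?andbF.
apply: (mulIf G_neq0); rewrite mulrAC indepDelta PrAG -mulrA indepS -PrG.
by rewrite [Pr p G * _]mulrC mulrA.
Qed.

Lemma odds_div_add (R : realType) (a b : R) :
  a + b != 0 -> odds (a / (a + b)) = a / b.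
Proof.
move=> ab_neq0; rewrite /odds.
have -> : 1 - a / (a + b) = b / (a + b).
  by apply: (mulIf ab_neq0); rewrite mulrBl !mulfVK // mul1r addrAC subrr add0r.
by rewrite invfM invrK mulrACA mulVf // mulr1.
Qed.

Lemma div_eq_of_proportional (R : fieldType) (n1 n0 m1 m0 c k : R) :
  c != 0 -> k != 0 -> n1 * c = k * m1 -> n0 * c = k * m0 -> n1 / n0 = m1 / m0.
Proof.
move=> c_neq0 k_neq0 n1E n0E.
have divKl (t x y : R) : t != 0 -> (t * x) / (t * y) = x / y.
  by move=> t_neq0; rewrite invfM mulrACA divff // mul1r.
by rewrite -(divKl c) // ![c * _]mulrC n1E n0E divKl.
Qed.

Lemma div_eq_swap (R : realFieldType) (a b c d : R) :
  0 <= a <= c -> 0 <= b <= d -> 0 < a + b -> a / c = b / d -> b / a = d / c.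
Proof.
move=> ac bd ab_gt0 acbd.
have div_eq0 (u v : R) : 0 <= u <= v -> (u / v == 0) = (u == 0).
  case/andP=> u_ge0 le_uv; rewrite mulf_eq0 invr_eq0.
  have [v0|_] := eqVneq v 0; last by rewrite orbF.
  by rewrite orbT; apply/esym/eqP/le_anti; rewrite u_ge0 andbT -v0.
have ac_neq0 : a / c != 0.
  apply: contraTneq ab_gt0 => ac0; move: (ac0); rewrite acbd => bd0.
  move/eqP: ac0; move/eqP: bd0; rewrite !div_eq0 // => /eqP-> /eqP->.
  by rewrite addr0 ltxx.
move: ac_neq0 (ac_neq0); rewrite {2}acbd !mulf_eq0 !invr_eq0 !negb_or.
move=> /andP[a_neq0 c_neq0] /andP[b_neq0 d_neq0].
by apply/eqP; rewrite eqr_div // eq_sym [d * a]mulrC -eqr_div // acbd.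
Qed.

Definition symptomatic (y : bool) : pred omega := fun w => vD w && (vY w == y).

Definition tested (y : bool) : pred omega := fun w => [&& vD w, vS w & vY w == y].

Section TestNegativeDesign.
Variables (R : realType) (p : omega -> R).
Hypothesis p_ge0 : forall w, 0 <= p w.
Hypothesis exactA : Pr p (fun w => [&& vD w, vS w & vAobs w != vA w]) = 0.
Hypothesis exactY : Pr p (fun w => [&& vD w, vS w & vYobs w != vY w]) = 0.

Definition PrAYD (a y : bool) : R :=
  Pr p (fun w => (vA w == a) && symptomatic y w).

Lemma recorded_exact w :
  p w != 0 -> vD w -> vS w -> vAobs w = vA w /\ vYobs w = vY w.
Proof.
move=> pw_neq0 Dw Sw; split; apply/eqP; apply: contraNT pw_neq0 => neq; apply/eqP.
- by apply: (Pr_eq0_pt p_ge0 exactA); rewrite /= Dw Sw.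
- by apply: (Pr_eq0_pt p_ge0 exactY); rewrite /= Dw Sw.
Qed.

Lemma muP_exact y :
  muP p y = Pr p (fun w => (vDelta w == true) && (vA w == true) && tested y w) /
            Pr p (fun w => (vDelta w == true) && tested y w).
Proof.
rewrite /muP /CPr; congr (_ / _); apply: eq_Pr_as => w /recorded_exact /=;
  rewrite /tested; case: (vD w); case: (vS w) => /= recorded; rewrite ?andbF //;
  by case: (recorded isT isT) => eA eY; rewrite ?eA eY;
     case: (vA w); case: (vDelta w).
Qed.

Lemma observed_Pr_gt0 y :
  0 < CPr p (fun w => vDelta w) (fun w => [&& vD w, vS w & vYobs w == y]) ->
  0 < Pr p (fun w => (vDelta w == true) && tested y w).
Proof.
move=> /(CPr_gt0 p_ge0); congr (0 < _); apply: eq_Pr_as => w /recorded_exact /=.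
rewrite /tested; case: (vD w); case: (vS w) => /= recorded; rewrite ?andbF //.
by case: (recorded isT isT) => _ ->; case: (vDelta w).
Qed.

Lemma tested_Pr_gt0 y :
  0 < Pr p (fun w => (vDelta w == true) && tested y w) -> 0 < Pr p (tested y).
Proof. by move/lt_le_trans; apply; apply: le_Pr => // w /andP[]. Qed.

Lemma symptomatic_Pr_gt0 y : 0 < Pr p (tested y) -> 0 < Pr p (symptomatic y).
Proof.
by move/lt_le_trans; apply; apply: le_Pr => // w /and3P[Dw _ Yy]; apply/andP.
Qed.

Lemma odds_muP y :
  cond_indep p vS vA (symptomatic y) -> cond_indep p vDelta vA (tested y) ->
  0 < CPr p (fun w => vDelta w) (fun w => [&& vD w, vS w & vYobs w == y]) ->
  odds (muP p y) = PrAYD true y / PrAYD false y.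
Proof.
move=> indepS indepDelta /observed_Pr_gt0 observed_gt0.
have tested_gt0 := tested_Pr_gt0 observed_gt0.
have symptomatic_gt0 := symptomatic_Pr_gt0 tested_gt0.
have testedE w : tested y w = vS w && symptomatic y w.
  by rewrite /tested /symptomatic; case: (vD w); case: (vS w).
have selected a := two_stage_selection_indep a testedE indepS indepDelta
  (lt0r_neq0 tested_gt0).
pose selected_exposed a :=
  Pr p (fun w => (vDelta w == true) && (vA w == a) && tested y w).
have observedE : Pr p (fun w => (vDelta w == true) && tested y w) =
                 selected_exposed true + selected_exposed false.
  by rewrite (PrID p _ vA); congr (_ + _); apply: eq_Pr => w; case: (vA w);
    rewrite ?andbF ?andbT.
rewrite muP_exact observedE odds_div_add -?observedE ?lt0r_neq0 //.
exact: div_eq_of_proportional (lt0r_neq0 symptomatic_gt0) (lt0r_neq0 observed_gt0)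
  (selected true) (selected false).
Qed.

Lemma CPr_PrAYD (E A : pred omega) (y a : bool) :
  (forall w, E w = (vY w == y) && vD w) -> (forall w, A w = (vA w == a)) ->
  CPr p E A = PrAYD a y / Pr p A.
Proof.
move=> EE AE; rewrite /CPr; congr (_ / _); apply: eq_Pr => w /=.
by rewrite EE AE /symptomatic andbC [(vY w == y) && _]andbC.
Qed.

Lemma RRPF_PrAYD :
  RRPF p =
  PrAYD true true / Pr p vA / (PrAYD false true / Pr p (fun w => ~~ vA w)).
Proof.
rewrite /RRPF (@CPr_PrAYD _ _ true true) ?(@CPr_PrAYD _ _ true false) //;
  by move=> w; case: (vA w); case: (vY w).
Qed.

Lemma noncase_exposure_ratio :
  0 < Pr p (symptomatic false) ->
  CPr p (fun w => ~~ vY w && vD w) (fun w => vA w) =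
    CPr p (fun w => ~~ vY w && vD w) (fun w => ~~ vA w) ->
  PrAYD false false / PrAYD true false = Pr p (fun w => ~~ vA w) / Pr p vA.
Proof.
move=> symptomatic_gt0.
rewrite (@CPr_PrAYD _ _ false true) ?(@CPr_PrAYD _ _ false false);
  try by move=> w; case: (vA w); case: (vY w).
have PrAYD_sum : PrAYD true false + PrAYD false false = Pr p (symptomatic false).
  by rewrite (PrID p _ vA); congr (_ + _); apply: eq_Pr => w; case: (vA w);
    rewrite ?andbT ?andbF.
apply: div_eq_swap; rewrite ?PrAYD_sum // Pr_ge0 //.
all: by apply: le_Pr => // w /andP[/eqP Aw _] /=; rewrite Aw.
Qed.
End TestNegativeDesign.

Theorem theorem1 (R : realType) (r : nat) (PF : 'rV[R]_r -> omega -> R)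
  (x : 'rV[R]_r)
  (Hpmf : is_pmf (PF x))
  (* (1) positivity of cases and noncases among the tested (observed data) *)
  (H1 : forall y : bool,
      0 < CPr (PF x) (fun w => (vYobs w == y) && vD w) (fun w => vS w))
  (* (2) positivity of exposure observation *)
  (H2 : forall y : bool,
      0 < CPr (PF x) (fun w => vDelta w)
                     (fun w => [&& vD w, vS w & vYobs w == y]))
  (* (3) positivity of testing in the full-data population *)
  (H3 : forall y : bool,
      0 < Pr (PF x) (fun w => vD w && (vY w == y)) ->
      0 < CPr (PF x) (fun w => vS w) (fun w => vD w && (vY w == y)))
  (* (4) S _||_ A | D=1, Y, X *)
  (H4 : forall y : bool,
      cond_indep (PF x) vS vA (fun w => vD w && (vY w == y)))
  (* (5) Delta _||_ A | D=1, S=1, Y, X *)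
  (H5 : forall y : bool,
      cond_indep (PF x) vDelta vA (fun w => [&& vD w, vS w & vY w == y]))
  (* (6) noncase exchangeability *)
  (H6 : CPr (PF x) (fun w => ~~ vY w && vD w) (fun w => vA w) =
        CPr (PF x) (fun w => ~~ vY w && vD w) (fun w => ~~ vA w))
  (* (7) recorded exposure equals true exposure in TND participants *)
  (H7 : Pr (PF x) (fun w => [&& vD w, vS w & vAobs w != vA w]) = 0)
  (* (8) test result equals true infection status in TND participants *)
  (H8 : Pr (PF x) (fun w => [&& vD w, vS w & vYobs w != vY w]) = 0) :
  ORP (PF x) = RRPF (PF x).
Proof.
have [p_ge0 _] := Hpmf.
have oddsE y := odds_muP p_ge0 H7 H8 (H4 y) (H5 y) (H2 y).
have symptomatic_gt0 := symptomatic_Pr_gt0 p_ge0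
  (tested_Pr_gt0 p_ge0 (observed_Pr_gt0 p_ge0 H7 H8 (H2 false))).
rewrite /ORP !oddsE RRPF_PrAYD !invf_div (noncase_exposure_ratio p_ge0) //.
by rewrite !mulf_div [Pr _ vA * _]mulrC.
Qed.
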